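(* Let $U=[N]$, let $\ell$ be a positive integer dividing $N$, let $\mathcal{S}=\{S_1,\dots,S_m\}$ be a collection of subsets of $U$ each of size $N/\ell$, and let $\varepsilon>0$ satisfy $\varepsilon\le 0.06$ and $\varepsilon\ge \frac1e-\left(1-\frac1\ell\right)^\ell$. Let $I_{\mathrm{rp}}$ be the $k$-RP instance with $k=\ell$, point set $\mathcal{X}=U\cup\mathcal{S}$ (an element point for each $u\in U$ and a set point for each $S\in\mathcal{S}$), distance $d(u,S)=1$ if $u\in S$ and $d(u,S)=2-\varepsilon$ if $u\notin S$ for $u\in U$, $S\in\mathcal{S}$; $d(u_1,u_2)=2$ for distinct $u_1,u_2\in U$; $d(S_1,S_2)=1$ for distinct set points; and $P$ uniform over the element points $U$. Suppose that any $\ell$ sets from $\mathcal{S}$ cover at most a $1-1/e+\varepsilon$ fraction of the elements of $U$ (a partial covering instance). Then every $k$-RP solution for $I_{\mathrm{rp}}$ consisting of $k$ set points (repetitions allowed) has cost at least $k\cdot\left(1+e^{-1+2/e}-e^{-1}-3(1+1/e)\varepsilon\right)$.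
   Context: For a finite metric space $(\mathcal{X},d)$, $\mathcal{X}_k$ is the set of multisets of exactly $k$ points of $\mathcal{X}$; for $A,B\in\mathcal{X}_k$, $d_k(A,B)$ is the minimum, over perfect matchings between the elements of $A$ and of $B$ (with multiplicity), of the sum of the distances of matched pairs; $P_k$ is the distribution of $k$ points drawn i.i.d. from $P$. A $k$-RP solution is a $K\in\mathcal{X}_k$, and its cost is $\mathbb{E}_{L\sim P_k}[d_k(K,L)]$. *)

From HB Require Import structures.
From mathcomp Require Import all_boot all_order all_algebra.
From mathcomp Require Import fingroup perm.
From mathcomp Require Import reals sequences exp.
Set Implicit Arguments. Unset Strict Implicit. Unset Printing Implicit Defensive.
Import Order.TTheory GRing.Theory Num.Theory.
Local Open Scope ring_scope.

(* Points of X = U + S : element points inl u (u : 'I_N) and set points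
   inr j (j : 'I_m, standing for S_j). *)
Definition rp_point (N m : nat) := ('I_N + 'I_m)%type.

Definition rp_dist (R : realType) (N m : nat) (S : 'I_m -> {set 'I_N}) (eps : R)
  (x y : rp_point N m) : R :=
  match x, y with
  | inl u, inl v => if u == v then 0 else 2
  | inl u, inr j => if u \in S j then 1 else 2 - eps
  | inr j, inl u => if u \in S j then 1 else 2 - eps
  | inr i, inr j => if i == j then 0 else 1
  end.

(* A multiset of k points is represented by a
   k-indexed family (multiplicities allowed); d_k is permutation invariant.
   The big min is seeded with the value of the identity matching, which is
   itself one of the candidates, so this is exactly the minimum. *)
Definition match_dist (R : realType) (T : Type) (d : T -> T -> R) (k : nat)
  (A B : 'I_k -> T) : R :=
  \big[Num.min/ \sum_(i < k) d (A i) (B i)]_(s : 'S_k)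
     \sum_(i < k) d (A i) (B (s i)).

(* cost of K = E_{L ~ P_k} [d_k(K, L)] with P uniform on the element points:
   L ranges uniformly over the N^k tuples of elements. *)
Definition rp_cost (R : realType) (N m : nat) (S : 'I_m -> {set 'I_N}) (eps : R)
  (k : nat) (K : 'I_k -> rp_point N m) : R :=
  (N%:R ^+ k)^-1 *
  \sum_(L : {ffun 'I_k -> 'I_N})
     match_dist (rp_dist S eps) K (fun i => inl (L i)).

From HB Require Import structures.
From mathcomp Require Import all_boot all_order all_algebra.
From mathcomp Require Import fingroup perm.
From mathcomp Require Import reals sequences exp.
From mathcomp Require Import ring lra.

(* Write T_1, ..., T_l for the chosen sets. Matching T_i with an element u costs 1 if
   u \in T_i and 2 - eps otherwise, so under any matching d_l(K, L) equals
   l (2 - eps) - (1 - eps) times the number of hits u \in T_i. An element covered by two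
   or more T_i may be hit at each of its occurrences in L, but an element covered by a
   single T_j can only be hit through T_j, so the hits at such elements are at most the
   number of T_j whose private part meets L. Hence the mean number of hits is at most l beta + sum_j (1 - (1 - q_j)^l),
   where beta and q_j are the densities of the multiply covered elements and of the
   private part of T_j. Bounding each (1 - q_j)^l from below by its tangent at
   1 - a/l, a = 1 - 2/e, leaves a linear program in alpha = sum_j q_j and beta, subject to
   the covering hypothesis alpha + beta <= 1 - 1/e + eps and the size count
   alpha + 2 beta <= 1. Its optimum, together with (1 - a/l)^l >= e^-a - 2 eps (this is
   where the lower bound on eps enters), gives the claim. *)

Set Implicit Arguments. Unset Strict Implicit. Unset Printing Implicit Defensive.
Import Order.TTheory GRing.Theory Num.Theory.

Lemma sum_boolE (T : finType) (A : {pred T}) : \sum_x (x \in A) = #|A|.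
Proof. by rewrite -sum1_card [RHS]big_mkcond; apply: eq_bigr => x _; case: (x \in A). Qed.

Section FfunCounting.
Variables I T : finType.

Lemma sum_ffun_forall (b : I -> pred T) :
  \sum_(f : {ffun I -> T}) [forall i, b i (f i)] = \prod_i #|b i|.
Proof.
under eq_bigr => i _ do rewrite -sum_boolE.
rewrite bigA_distr_bigA /=; apply: eq_bigr => f _.
have [/forallP b_f | /forallPn [i nb_fi]] := boolP [forall i, b i (f i)].
  by rewrite big1 // => i _; rewrite unfold_in b_f.
by rewrite (bigD1 i) //= unfold_in (negbTE nb_fi).
Qed.

Lemma sum_ffun_mem (A : {set T}) (i : I) :
  \sum_(f : {ffun I -> T}) (f i \in A) = #|A| * #|T| ^ #|I|.-1.
Proof.
pose b j : pred T := fun x => (j != i) || (x \in A).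
rewrite (eq_bigr (fun f : {ffun I -> T} => [forall j, b j (f j)] : nat)); last first.
  move=> f _; congr nat_of_bool; apply/idP/forallP => [fiA j | /(_ i)].
    by rewrite /b; case: eqP => // ->.
  by rewrite /b eqxx.
rewrite sum_ffun_forall (bigD1 i) //=; congr (_ * _).
  by apply: eq_card => x; rewrite unfold_in /b eqxx.
rewrite (eq_bigr (fun _ => #|T|)) => [|j ji]; last first.
  by apply: eq_card => x; rewrite unfold_in /b ji.
by rewrite prod_nat_const cardC1.
Qed.

Lemma sum_ffun_exists (A : {set T}) :
  \sum_(f : {ffun I -> T}) [exists i, f i \in A] = #|T| ^ #|I| - (#|T| - #|A|) ^ #|I|.
Proof.
have none : \sum_(f : {ffun I -> T}) [forall i, f i \notin A] = (#|T| - #|A|) ^ #|I|.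
  rewrite (sum_ffun_forall (fun _ => [predC A])) prod_nat_const.
  by rewrite -(cardC A) addKn.
have all : \sum_(f : {ffun I -> T}) 1 = #|T| ^ #|I| by rewrite sum1_card card_ffun.
rewrite -none -all -sumnB => [|f _]; last by case: [forall i, _].
by apply: eq_bigr => f _; rewrite -negb_exists; case: [exists i, _].
Qed.

End FfunCounting.

Section Hits.
Variables (N m l : nat) (S : 'I_m -> {set 'I_N}) (K : 'I_l -> 'I_m).

Definition cover_count (u : 'I_N) : nat := \sum_i (u \in S (K i)).
Definition once_covered : {set 'I_N} := [set u | cover_count u == 1].
Definition multi_covered : {set 'I_N} := [set u | 1 < cover_count u].
Definition private_part (i : 'I_l) : {set 'I_N} := S (K i) :&: once_covered.
Definition hit_bound (L : {ffun 'I_l -> 'I_N}) : nat :=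
  \sum_i (L i \in multi_covered) + \sum_i [exists i', L i' \in private_part i].

Lemma cover_count_gt0 u : (0 < cover_count u) = (u \in \bigcup_i S (K i)).
Proof.
by rewrite /cover_count sum_boolE; apply/card_gt0P/bigcupP => [[i ui] | [i _ ui]];
  exists i.
Qed.

Lemma sum_card_private : \sum_i #|private_part i| = #|once_covered|.
Proof.
under eq_bigr => i _ do rewrite -sum_boolE.
rewrite exchange_big -sum_boolE; apply: eq_bigr => u _.
under eq_bigr => i _ do rewrite inE.
have [u_once | _] := boolP (u \in once_covered); last first.
  by rewrite big1 // => i _; rewrite andbF.
under eq_bigr => i _ do rewrite andbT.
by move: u_once; rewrite inE => /eqP.
Qed.

Lemma card_once_multi_le_cover :
  #|once_covered| + #|multi_covered| <= #|\bigcup_i S (K i)|.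
Proof.
rewrite -!sum_boolE -big_split /=; apply: leq_sum => u _.
by rewrite !inE -cover_count_gt0; case: cover_count => [|[|c]].
Qed.

Lemma card_once_double_multi_le :
  #|once_covered| + 2 * #|multi_covered| <= \sum_i #|S (K i)|.
Proof.
under [X in _ <= X]eq_bigr => i _ do rewrite -sum_boolE.
rewrite exchange_big -!sum_boolE big_distrr -big_split /=; apply: leq_sum => u _.
by rewrite !inE -/(cover_count u); case: cover_count => [|[|c]].
Qed.

Lemma hits_le_hit_bound (L : {ffun 'I_l -> 'I_N}) (s : 'S_l) :
  \sum_i (L (s i) \in S (K i)) <= hit_bound L.
Proof.
rewrite /hit_bound [X in _ <= X + _](reindex_inj (@perm_inj _ s)) /= -big_split /=.
apply: leq_sum => i _.
have [hit | //] := boolP (L (s i) \in S (K i)).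
have [// | not_multi] := boolP (L (s i) \in multi_covered).
rewrite add0n lt0b; apply/existsP; exists (s i); rewrite !inE hit /=.
have : 0 < cover_count (L (s i)) by rewrite cover_count_gt0; apply/bigcupP; exists i.
by move: not_multi; rewrite inE; case: cover_count => [|[|c]].
Qed.

Lemma sum_hit_bound :
  \sum_(L : {ffun 'I_l -> 'I_N}) hit_bound L =
  l * (#|multi_covered| * N ^ l.-1) + \sum_i (N ^ l - (N - #|private_part i|) ^ l).
Proof.
rewrite big_split /=; congr (_ + _); rewrite exchange_big /=.
  under eq_bigr => i _ do rewrite sum_ffun_mem !card_ord.
  by rewrite sum_nat_const card_ord.
by apply: eq_bigr => i _; rewrite sum_ffun_exists !card_ord.
Qed.

Local Open Scope ring_scope.
Variable R : realType.

Lemma sum_rp_dist_match (eps : R) (L : {ffun 'I_l -> 'I_N}) (s : 'S_l) :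
  \sum_i rp_dist S eps (inr (K i)) (inl (L (s i))) =
  l%:R * (2 - eps) - (1 - eps) * (\sum_i (L (s i) \in S (K i)) : nat)%:R.
Proof.
rewrite (eq_bigr (fun i => 2 - eps - (1 - eps) * (L (s i) \in S (K i) : nat)%:R)); last first.
  by move=> i _ /=; case: (_ \in _) => /=; ring.
by rewrite sumrB sumr_const card_ord -mulr_sumr -natr_sum mulr_natl.
Qed.

Lemma match_dist_ge (eps : R) (L : {ffun 'I_l -> 'I_N}) : eps <= 1 ->
  l%:R * (2 - eps) - (1 - eps) * (hit_bound L)%:R <=
  match_dist (rp_dist S eps) (fun i => inr (K i)) (fun i => inl (L i)).
Proof.
move=> eps_le1.
have per_matching (s : 'S_l) : l%:R * (2 - eps) - (1 - eps) * (hit_bound L)%:R <=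
    \sum_i rp_dist S eps (inr (K i)) (inl (L (s i))).
  by rewrite sum_rp_dist_match lerD2l lerN2 ler_wpM2l ?subr_ge0 // ler_nat hits_le_hit_bound.
rewrite /match_dist; apply: (big_ind (fun x => _ <= x)) => [|x y|s _].
- by under eq_bigr => i _ do rewrite -[i in L i](perm1 i); exact: per_matching.
- by rewrite le_min => -> ->.
- exact: per_matching.
Qed.

Lemma mean_hit_bound : (0 < N)%N -> (0 < l)%N ->
  (N%:R ^+ l)^-1 * (\sum_(L : {ffun 'I_l -> 'I_N}) hit_bound L)%:R =
  l%:R * (#|multi_covered|%:R / N%:R) +
  \sum_i (1 - (1 - #|private_part i|%:R / N%:R) ^+ l) :> R.
Proof.
move=> N_gt0 l_gt0; have N_neq0 : N%:R != 0 :> R by rewrite pnatr_eq0 -lt0n.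
rewrite sum_hit_bound natrD mulrDr; congr (_ + _).
  rewrite !natrM natrX -[in N%:R ^+ l](prednK l_gt0) exprS.
  by field; rewrite N_neq0 expf_neq0.
rewrite natr_sum mulr_sumr; apply: eq_bigr => i _.
have P_le : (#|private_part i| <= N)%N by rewrite -[N in (_ <= N)%N]card_ord max_card.
rewrite natrB ?leq_exp2r ?leq_subr // !natrX natrB //.
have -> : 1 - #|private_part i|%:R / N%:R = (N%:R - #|private_part i|%:R) / N%:R :> R.
  by field.
by rewrite exprMn exprVn; field; rewrite expf_neq0.
Qed.

Lemma rp_cost_ge (eps : R) : (0 < N)%N -> (0 < l)%N -> eps <= 1 ->
  l%:R * (2 - eps) - (1 - eps) * (l%:R * (#|multi_covered|%:R / N%:R) +
    \sum_i (1 - (1 - #|private_part i|%:R / N%:R) ^+ l)) <=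
  rp_cost S eps (fun i => inr (K i)).
Proof.
move=> N_gt0 l_gt0 eps_le1.
have Nl_gt0 : 0 < N%:R ^+ l :> R by rewrite exprn_gt0 // ltr0n.
rewrite -mean_hit_bound // /rp_cost.
apply: (le_trans (y := (N%:R ^+ l)^-1 * \sum_(L : {ffun 'I_l -> 'I_N})
    (l%:R * (2 - eps) - (1 - eps) * (hit_bound L)%:R))); last first.
  rewrite ler_wpM2l ?invr_ge0 ?(ltW Nl_gt0) //; apply: ler_sum => L _; exact: match_dist_ge.
rewrite sumrB sumr_const card_ffun !card_ord -mulr_sumr -natr_sum.
set c := l%:R * (2 - eps); rewrite -[c *+ _]mulr_natr natrX mulrBr.
by rewrite [c * _]mulrC mulKf ?gt_eqF // [(1 - eps) * _]mulrCA.
Qed.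

Lemma private_density_le1 : (0 < N)%N ->
  forall i, #|private_part i|%:R / N%:R <= 1 :> R.
Proof.
move=> N_gt0 i; rewrite ler_pdivrMr ?ltr0n // mul1r ler_nat.
by rewrite -[N in (_ <= N)%N]card_ord max_card.
Qed.

Lemma sum_private_density : (0 < N)%N ->
  \sum_i #|private_part i|%:R / N%:R = #|once_covered|%:R / N%:R :> R.
Proof. by move=> N_gt0; rewrite -mulr_suml -natr_sum sum_card_private. Qed.

Lemma private_multi_density_le_cover (c : R) : (0 < N)%N ->
  #|\bigcup_i S (K i)|%:R <= c * N%:R ->
  \sum_i #|private_part i|%:R / N%:R + #|multi_covered|%:R / N%:R <= c.
Proof.
move=> N_gt0 cover_le; rewrite sum_private_density // -mulrDl -natrD.
rewrite ler_pdivrMr ?ltr0n //; apply: le_trans cover_le.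
by rewrite ler_nat card_once_multi_le_cover.
Qed.

Lemma private_multi_density_le_size : (0 < N)%N -> (\sum_i #|S (K i)| <= N)%N ->
  \sum_i #|private_part i|%:R / N%:R + 2 * (#|multi_covered|%:R / N%:R) <= 1 :> R.
Proof.
move=> N_gt0 size_le; rewrite sum_private_density // mulrA -mulrDl -natrM -natrD.
rewrite ler_pdivrMr ?ltr0n // mul1r ler_nat.
exact: leq_trans (card_once_double_multi_le) size_le.
Qed.

End Hits.

Section RealBounds.
Variable R : realType.
Local Open Scope ring_scope.
Implicit Types (a s x y z : R) (n : nat).

Lemma exprS_ge_tangent n y (y0 : R) : 0 <= y -> 0 <= y0 ->
  y0 ^+ n.+1 + n.+1%:R * y0 ^+ n * (y - y0) <= y ^+ n.+1.
Proof.
move=> y_ge0 y0_ge0; elim: n => [|n IHn]; first by rewrite !expr1 expr0; lra.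
apply: le_trans (_ : y * (y0 ^+ n.+1 + n.+1%:R * y0 ^+ n * (y - y0)) <= _).
  rewrite -subr_ge0 [n.+2%:R]mulrSr !exprS.
  have -> : y * (y0 * y0 ^+ n + n.+1%:R * y0 ^+ n * (y - y0)) -
    (y0 * (y0 * y0 ^+ n) + (n.+1%:R + 1) * (y0 * y0 ^+ n) * (y - y0)) =
    n.+1%:R * y0 ^+ n * (y - y0) ^+ 2 by rewrite expr2; ring.
  by rewrite mulr_ge0 ?sqr_ge0 // mulr_ge0 // exprn_ge0.
by rewrite [y ^+ n.+2]exprS ler_wpM2l.
Qed.

Lemma exprS_sub_le n y z : 0 <= y -> y <= z -> z <= 1 ->
  z ^+ n.+1 - y ^+ n.+1 <= n.+1%:R * (z - y).
Proof.
move=> y_ge0 yz z_le1.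
have z_ge0 : 0 <= z by apply: le_trans yz.
have zn_le1 : z ^+ n <= 1 by rewrite exprn_ile1.
have := exprS_ge_tangent n y_ge0 z_ge0.
have : n.+1%:R * z ^+ n * (z - y) <= n.+1%:R * (z - y).
  by rewrite -mulrA ler_wpM2l // ler_piMl ?subr_ge0.
lra.
Qed.

Lemma expR1_le3 : expR 1 <= 3 :> R.
Proof.
have e6_gt0 : 0 < expR (6^-1 : R) by apply: expR_gt0.
have e6_le : expR (6^-1 : R) <= 6 / 5.
  have := expR_ge1Dx (- (6^-1 : R)); rewrite expRN.
  move/(ler_wpM2r (ltW e6_gt0)); rewrite mulVf ?gt_eqF //; lra.
have -> : expR 1 = expR (6^-1 : R) ^+ 6 by rewrite -expRM_natl mulfV // pnatr_eq0.
apply: le_trans (_ : (6 / 5) ^+ 6 <= 3); last by rewrite !exprS expr0; lra.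
by rewrite lerXn2r // nnegrE ?(ltW e6_gt0) //; lra.
Qed.

Lemma expRN_sub_exprS_le n a : 0 <= a <= 1 ->
  expR (- a) - (1 - a / n.+1%:R) ^+ n.+1 <= a ^+ 2 / n.+1%:R.
Proof.
case/andP=> a_ge0 a_le1; set L : R := n.+1%:R.
have L_ge1 : 1 <= L by rewrite ler1n.
set t := a / L; set z := expR (- t).
have t_ge0 : 0 <= t by rewrite divr_ge0 // ler0n.
have t_le1 : t <= 1 by rewrite ler_pdivrMr ?mul1r; lra.
have -> : expR (- a) = z ^+ n.+1.
  by rewrite -expRM_natl mulrN /t mulrCA mulfV ?mulr1 // pnatr_eq0.
have z_ge : 1 - t <= z := expR_ge1Dx _.
have z_le1 : z <= 1 by rewrite expR_le1; lra.
have z_le : z - (1 - t) <= t ^+ 2.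
  have : z * (1 + t) <= z * expR t by rewrite ler_wpM2l ?expR_ge1Dx // ltW ?expR_gt0.
  rewrite /z expRN mulVf ?gt_eqF ?expR_gt0 // -/z expr2; nra.
have omt_ge0 : 0 <= 1 - t by lra.
apply: le_trans (exprS_sub_le n omt_ge0 z_ge z_le1) _.
have -> : a ^+ 2 / L = L * t ^+ 2 by rewrite /t; field; lra.
by rewrite ler_wpM2l ?ler0n.
Qed.

Lemma one_sub_le_expRN_mul s : 0 <= s <= 1 ->
  1 - s <= expR (- s) * (1 - s ^+ 2 / 4).
Proof.
case/andP=> s_ge0 s_le1; set E := expR (s / 2).
have E_gt0 : 0 < E := expR_gt0 _.
have EE : expR (- s) * (E * E) = 1.
  by rewrite -!expRD (_ : _ + _ = 0) ?expR0 //; lra.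
have u_le1 : (1 - s / 2) * E <= 1.
  have := ler_wpM2r (ltW E_gt0) (expR_ge1Dx (- (s / 2))).
  by rewrite -expRD addNr expR0.
have key : (1 - s) * (E * E) <= 1 - s ^+ 2 / 4.
  rewrite -(ler_pM2r (_ : 0 < (1 - s / 2) ^+ 2)); last by rewrite exprn_gt0 //; lra.
  apply: le_trans (_ : 1 - s <= _); last by rewrite !expr2; nra.
  have -> : (1 - s) * (E * E) * (1 - s / 2) ^+ 2 = (1 - s) * ((1 - s / 2) * E) ^+ 2.
    by rewrite !expr2; ring.
  by rewrite ler_piMr ?subr_ge0 // exprn_ile1 // mulr_ge0 //; lra.
have -> : 1 - s = expR (- s) * ((1 - s) * (E * E)) by rewrite mulrCA EE mulr1.
by rewrite ler_wpM2l // ltW ?expR_gt0.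
Qed.

Lemma exprS_one_sub_mul_le n x : 0 <= x <= 1 ->
  (1 - x) ^+ n.+1 * (1 + n.+1%:R * x) <= 1.
Proof.
case/andP=> x_ge0 x_le1.
have bernoulli : 1 + n.+1%:R * x <= (1 + x) ^+ n.+1.
  by have := @exprS_ge_tangent n (1 + x) 1; rewrite !expr1n mulr1; lra.
apply: le_trans (_ : (1 - x) ^+ n.+1 * (1 + x) ^+ n.+1 <= 1).
  by rewrite ler_wpM2l // exprn_ge0 // subr_ge0.
by rewrite -exprMn exprn_ile1 //; nra.
Qed.

Lemma invexpR1_sub_exprS_ge n :
  (expR 1)^-1 / (4 * n.+1%:R + 1) <= (expR 1)^-1 - (1 - n.+1%:R^-1) ^+ n.+1 :> R.
Proof.
have n_ge0 : 0 <= n%:R :> R := ler0n _ _.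
set L : R := n.+1%:R; set s := L^-1; set x := s ^+ 2 / 4.
have L_ge1 : 1 <= L by rewrite ler1n.
have s_ge0 : 0 <= s by rewrite invr_ge0; lra.
have s_le1 : s <= 1 by rewrite invr_le1 // ?unitfE; lra.
have x_ge0 : 0 <= x by rewrite divr_ge0 ?sqr_ge0.
have x_le1 : x <= 1 by rewrite /x expr2; nra.
have ie_gt0 : 0 < (expR 1)^-1 :> R by rewrite invr_gt0 expR_gt0.
have pow_le : (1 - s) ^+ n.+1 <= (expR 1)^-1 * (1 - x) ^+ n.+1.
  have -> : (expR 1)^-1 = expR (- s) ^+ n.+1.
    by rewrite -expRM_natl mulrN mulfV ?expRN // pnatr_eq0.
  by rewrite -exprMn lerXn2r // ?nnegrE ?one_sub_le_expRN_mul ?s_ge0 //;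
    rewrite ?mulr_ge0 ?(ltW (expR_gt0 _)) //; lra.
have Lx : L * x = (4 * L)^-1 by rewrite /x /s; field; lra.
have x01 : 0 <= x <= 1 by rewrite x_ge0 x_le1.
have := exprS_one_sub_mul_le n x01; rewrite -/L Lx.
move=> r_le; set r := (1 - x) ^+ n.+1 in pow_le r_le *.
have -> : (expR 1)^-1 / (4 * L + 1) =
    (expR 1)^-1 * (1 - 4 * L / (4 * L + 1)) by field; rewrite (gt_eqF (expR_gt0 _)) andbT; lra.
apply: (le_trans (y := (expR 1)^-1 * (1 - r))); last by rewrite mulrBr mulr1; lra.
rewrite ler_wpM2l ?(ltW ie_gt0) // lerD2l lerN2 ler_pdivlMr; last lra.
have -> : r * (4 * L + 1) = r * (1 + (4 * L)^-1) * (4 * L) by field; lra.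
by rewrite ler_piMl //; lra.
Qed.

Lemma invexpR1_bounds : 1 / 3 <= (expR (1 : R))^-1 <= 1 / 2.
Proof.
have e_ge2 : 2 <= expR 1 :> R by have := expR_ge1Dx (1 : R); lra.
rewrite -[1 / 3]invf_div -[1 / 2]invf_div !divr1.
by rewrite !lef_pV2 ?posrE ?expR_gt0 ?expR1_le3.
Qed.

Lemma exprS_one_sub_div_ge n a eps : 0 <= a <= 1 / 3 -> eps <= 6 / 100 ->
  (expR 1)^-1 - (1 - n.+1%:R^-1) ^+ n.+1 <= eps ->
  expR (- a) - 2 * eps <= (1 - a / n.+1%:R) ^+ n.+1.
Proof.
case/andP=> a_ge0 a_le eps_le gap_le; set L : R := n.+1%:R.
have L_gt0 : 0 < L by rewrite ltr0n.
have /andP [ie_ge _] := invexpR1_bounds.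
(* the lower bound on eps forces [a^2 <= 1/9 <= 2 eps L] *)
have aL : a ^+ 2 / L <= 2 * eps.
  have := le_trans (invexpR1_sub_exprS_ge n) gap_le; rewrite -/L.
  rewrite ler_pdivrMr ?ler_pdivrMr; last 2 first.
  - by [].
  - by rewrite ltr_wpDl // mulr_ge0 // ltW.
  by move=> h; rewrite expr2; nra.
have a01 : 0 <= a <= 1 by rewrite a_ge0 /=; lra.
have := expRN_sub_exprS_le n a01.
rewrite -/L; clearbody L; lra.
Qed.

Lemma two_constraint_lp_le (c al be w : R) : 1 / 2 <= w <= 1 ->
  al + be <= c -> al + 2 * be <= 1 -> be + w * al <= (2 * w - 1) * c + (1 - w).
Proof.
case/andP=> w_ge w_le1 hc h1.
rewrite -subr_ge0.
have -> : (2 * w - 1) * c + (1 - w) - (be + w * al) =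
  (2 * w - 1) * (c - al - be) + (1 - w) * (1 - al - 2 * be) by ring.
by rewrite addr_ge0 // mulr_ge0 //; lra.
Qed.

Lemma sum_one_sub_exprS_le n (q : 'I_n.+1 -> R) (y0 : R) :
  0 <= y0 -> (forall j, q j <= 1) ->
  \sum_j (1 - (1 - q j) ^+ n.+1) <=
  n.+1%:R * (1 - y0 ^+ n.+1 - y0 ^+ n * (n.+1%:R * (1 - y0) - \sum_j q j)).
Proof.
move=> y0_ge0 q_le1.
rewrite [X in _ <= X](_ : _ = \sum_(j < n.+1)
    (1 - y0 ^+ n.+1 - n.+1%:R * y0 ^+ n * (1 - q j - y0))); last first.
  rewrite [RHS](eq_bigr (fun j => 1 - y0 ^+ n.+1 - n.+1%:R * y0 ^+ n * (1 - y0)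
                            + n.+1%:R * y0 ^+ n * q j)); last by move=> j _; ring.
  by rewrite big_split /= sumr_const card_ord -mulr_sumr -[_ *+ n.+1]mulr_natl; ring.
apply: ler_sum => j _.
have := @exprS_ge_tangent n (1 - q j) y0; rewrite subr_ge0 q_le1 => /(_ isT y0_ge0).
lra.
Qed.

Lemma expected_hits_le n (q : 'I_n.+1 -> R) (be eps : R) :
  (forall j, q j <= 1) -> 0 <= eps -> eps <= 6 / 100 ->
  (expR 1)^-1 - (1 - n.+1%:R^-1) ^+ n.+1 <= eps ->
  \sum_j q j + be <= 1 - (expR 1)^-1 + eps -> \sum_j q j + 2 * be <= 1 ->
  n.+1%:R * be + \sum_j (1 - (1 - q j) ^+ n.+1) <=
  n.+1%:R * (1 + (expR 1)^-1 - expR (-1 + 2 / expR 1) + 3 * eps).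
Proof.
move=> q_le1 eps_ge0 eps_le gap_le cover_le size_le.
have /andP [ie_ge ie_le] := invexpR1_bounds.
have a_bounds : 0 <= 1 - 2 * (expR (1 : R))^-1 <= 1 / 3 by apply/andP; split; lra.
have Y_ge := exprS_one_sub_div_ge a_bounds eps_le gap_le.
rewrite (_ : -1 + 2 / expR 1 = - (1 - 2 * (expR 1)^-1)); last lra.
move: (expR 1)^-1 ie_ge ie_le cover_le a_bounds Y_ge.
move=> ie ie_ge ie_le cover_le /andP [a_ge0 a_le] Y_ge.
have L_ge1 : 1 <= n.+1%:R :> R by rewrite ler1n.
have y0_ge0 : 0 <= 1 - (1 - 2 * ie) / n.+1%:R by rewrite subr_ge0 ler_pdivrMr ?mul1r; lra.
have y0_le1 : 1 - (1 - 2 * ie) / n.+1%:R <= 1 by rewrite lerBlDr lerDl divr_ge0 //; lra.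
have := sum_one_sub_exprS_le y0_ge0 q_le1.
rewrite (_ : n.+1%:R * (1 - (1 - (1 - 2 * ie) / n.+1%:R)) = 1 - 2 * ie); last first.
  by rewrite opprB addrC subrK mulrC divfK // gt_eqF //; lra.
move: (1 - _ / n.+1%:R) y0_ge0 y0_le1 Y_ge => y0 y0_ge0 y0_le1 Y_ge tangent.
have w_le1 : y0 ^+ n <= 1 by rewrite exprn_ile1.
have w_ge : y0 ^+ n.+1 <= y0 ^+ n by rewrite exprS ler_piMl ?exprn_ge0.
have w_bounds : 1 / 2 <= y0 ^+ n <= 1.
  by rewrite w_le1 andbT; have := expR_ge1Dx (- (1 - 2 * ie)); lra.
have lp := two_constraint_lp_le w_bounds cover_le size_le.
have weps : y0 ^+ n * eps <= eps by rewrite ler_piMl.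
apply: le_trans (_ : n.+1%:R * be +
  n.+1%:R * (1 - y0 ^+ n.+1 - y0 ^+ n * (1 - 2 * ie - \sum_j q j)) <= _).
  by rewrite lerD2l.
rewrite -mulrDr ler_wpM2l ?ler0n //; lra.
Qed.

End RealBounds.

Local Open Scope ring_scope.

Theorem lemma4 (R : realType) (N m l : nat) (S : 'I_m -> {set 'I_N}) (eps : R) :
  (0 < N)%N -> (0 < l)%N -> (l %| N)%N ->
  (forall j : 'I_m, #|S j| = (N %/ l)%N) ->
  0 < eps -> eps <= 6 / 100 ->
  (expR 1)^-1 - (1 - l%:R^-1) ^+ l <= eps ->
  (forall f : 'I_l -> 'I_m,
      #|\bigcup_(i < l) S (f i)|%:R <= (1 - (expR 1)^-1 + eps) * N%:R) ->
  forall K : 'I_l -> 'I_m,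
    l%:R * (1 + expR (-1 + 2 / expR 1) - (expR 1)^-1
            - 3 * (1 + (expR 1)^-1) * eps)
    <= rp_cost S eps (fun i => inr (K i)).
Proof.
move=> N_gt0 l_gt0 l_dvd_N card_S eps_gt0 eps_le gap_le cover_le K.
case: l => [//|n] in l_gt0 l_dvd_N card_S gap_le cover_le K *.
have eps_le1 : eps <= 1 by lra.
apply: le_trans (rp_cost_ge S K N_gt0 l_gt0 eps_le1).
have size_le : (\sum_i #|S (K i)| <= N)%N.
  by rewrite (eq_bigr _ (fun i _ => card_S (K i))) sum_nat_const card_ord mulnC divnK.
have hits := expected_hits_le (private_density_le1 S K R N_gt0) (ltW eps_gt0) eps_le
  gap_le (private_multi_density_le_cover N_gt0 (cover_le K))
  (private_multi_density_le_size R N_gt0 size_le).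
have /andP [ie_ge ie_le] := invexpR1_bounds R.
have w_le1 : expR (-1 + 2 / expR 1) <= 1 :> R by rewrite expR_le1; lra.
apply: (le_trans (y := n.+1%:R * (2 - eps) - (1 - eps) *
    (n.+1%:R * (1 + (expR 1)^-1 - expR (-1 + 2 / expR 1) + 3 * eps)))).
  rewrite mulrCA -mulrBr ler_wpM2l ?ler0n //.
  have : 0 <= eps * (4 * (expR 1)^-1 - expR (-1 + 2 / expR 1) + 3 * eps).
    by rewrite mulr_ge0 //; lra.
  lra.
by rewrite lerD2l lerN2 ler_wpM2l // subr_ge0; lra.
Qed.
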